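(* Let $1\le d<\omega$, $2\le k<\omega$, and let $P$ be a $d$-dimensional $k$-template. Then $\chi(L(\mathbb R^d,P))^{+(d-1)}\ge 2^{\aleph_0}$.
   Context: A $d$-dimensional $k$-template is a set $P$ of $d$-tuples with $|P|=k$. If $P,Q$ are $d$-dimensional templates, $Q$ is a homomorphic image of $P$ if there is a surjection $f:P\to Q$ such that for all $x,y\in P$ and $i<d$, $x_i=y_i$ implies $f(x)_i=f(y)_i$. $L(\mathbb R^d,P)$ is the $k$-hypergraph with vertex set $\mathbb R^d$ whose edges are the $k$-templates $Q\subseteq\mathbb R^d$ that are homomorphic images of $P$. $\chi$ is the chromatic number (least cardinal number of colors in a vertex coloring not constant on any edge). $\kappa^+$ is the successor cardinal, $\kappa^{+0}=\kappa$, $\kappa^{+(n+1)}=(\kappa^{+n})^+$. *)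

From mathcomp Require Import all_boot.
From Stdlib Require Import Reals.

Set Implicit Arguments.
Unset Strict Implicit.
Unset Printing Implicit Defensive.

Definition has_card_ord (X : Type) (A : X -> Prop) (k : nat) : Prop :=
  exists g : 'I_k -> X, injective g /\ (forall x, A x <-> exists i, g i = x).

Definition template (d k : nat) (T : Type) (P : ('I_d -> T) -> Prop) : Prop :=
  has_card_ord P k.

Definition hom_image (d : nat) (T U : Type)
  (P : ('I_d -> T) -> Prop) (Q : ('I_d -> U) -> Prop) : Prop :=
  exists f : ('I_d -> T) -> ('I_d -> U),
    (forall x, P x -> Q (f x)) /\
    (forall y, Q y -> exists x, P x /\ f x = y) /\
    (forall x y, P x -> P y -> forall i : 'I_d, x i = y i -> f x i = f y i).

Definition L_edge (d k : nat) (T : Type) (P : ('I_d -> T) -> Prop)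
  (Q : ('I_d -> R) -> Prop) : Prop :=
  has_card_ord Q k /\ hom_image P Q.

Definition proper_coloring (d k : nat) (T : Type) (P : ('I_d -> T) -> Prop)
  (C : Type) (c : ('I_d -> R) -> C) : Prop :=
  forall Q, L_edge k P Q -> exists x y, Q x /\ Q y /\ c x <> c y.

(* The cardinality of the type K is the chromatic number of L(R^d,P):
   some proper colouring uses colour set K, and K injects into the colour
   set of every proper colouring. *)
Definition is_chromatic_number (d k : nat) (T : Type)
  (P : ('I_d -> T) -> Prop) (K : Type) : Prop :=
  (exists c : ('I_d -> R) -> K, proper_coloring k P c) /\
  (forall (C : Type) (c : ('I_d -> R) -> C), proper_coloring k P c ->
     exists h : K -> C, injective h).

Definition strict_wellorder (X : Type) (A : X -> Prop) (lt : X -> X -> Prop)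
  : Prop :=
  (forall x, ~ lt x x) /\
  (forall x y z, lt x y -> lt y z -> lt x z) /\
  (forall x y, A x -> A y -> x = y \/ lt x y \/ lt y x) /\
  (forall B : X -> Prop, (forall x, B x -> A x) -> (exists x, B x) ->
     exists m, B m /\ forall y, B y -> ~ lt y m).

(* card_le_succ n A K  <->  |A| <= |K|^{+n}.
   n = 0: A injects into K.
   n+1: |A| <= kappa^{+(n+1)} iff A carries a well-order all of whose
   proper initial segments have cardinality <= kappa^{+n}. *)
Fixpoint card_le_succ (n : nat) (X : Type) (A : X -> Prop) (K : Type)
  {struct n} : Prop :=
  match n with
  | 0 => exists f : X -> K, forall x y, A x -> A y -> f x = f y -> x = y
  | n'.+1 => exists lt : X -> X -> Prop, strict_wellorder A lt /\
      forall a, A a -> card_le_succ n' (fun x => A x /\ lt x a) K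
  end.

From mathcomp Require Import all_boot.
From Stdlib Require Import Reals.
From mathcomp Require Import boolp wochoice zify.
From mathcomp Require classical_sets.
From Coquelicot Require Coquelicot.
From Stdlib Require Import Lra.

Set Implicit Arguments.
Unset Strict Implicit.
Unset Printing Implicit Defensive.

(* With finitely many colours, a finite counting argument yields a monochromatic box
   S_0 x ... x S_(d-1) in R^d with |S_i| = k.  With infinitely many colours K, so that
   |K x K| = |K| by Hessenberg's theorem, one proves by induction on n, in the style of
   Erdos-Rado: if the i-th side has more than K^{+i} points for each i < n, every
   K-colouring of the product has a monochromatic k-box.  Shrink the first n sides so
   that their union has at most K^{+n} points, and label each point y of the last side by
   a monochromatic box of the slice through y together with its colour; there are at most
   K^{+n} labels and more points, so k points share a label and extend the box by one
   side.  A monochromatic box contains an edge of L(R^d, P), namely the coordinatewise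
   image of P, so a proper K-colouring forces |R| <= K^{+(d-1)}; and 2^aleph_0 injects
   into R by ternary expansions. *)

Lemma choice_default (X Y : Type) (y0 : Y) (R : X -> Y -> Prop) :
  exists f : X -> Y, forall x, (exists y, R x y) -> R x (f x).
Proof.
have /choice[f fP] : forall x, exists y, (exists y, R x y) -> R x y.
  by move=> x; have [[y Rxy]|nR] := pselect (exists y, R x y); [exists y|exists y0].
by exists f.
Qed.

(** * Well-orders and the cardinals K^{+n} *)

Lemma strict_wellorder_exists (X : Type) :
  exists lt : X -> X -> Prop, strict_wellorder (fun _ => True) lt.
Proof.
have [R wR] := well_ordering_principle {classic X}.
have woR : wo_chain R predT by move=> A _; exact: wR.
have Rtot := wo_chainW woR.
have Ranti := wo_chain_antisymmetric woR.
have Rtrans (x y z : {classic X}) : R x y -> R y z -> R x z.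
  move=> Rxy Ryz; have [|w [[]]] := wR (mem [:: x; y; z]).
    by exists x; rewrite inE eqxx.
  rewrite !inE => /or3P[] /eqP-> lbw _.
  - by apply: lbw; rewrite !inE eqxx !orbT.
  - by rewrite (Ranti x y) // Rxy lbw // inE eqxx.
  - by rewrite -(Ranti y z) // Ryz lbw // !inE eqxx !orbT.
exists (fun x y : X => R x y /\ x <> y); split; [|split; [|split]].
- by move=> x [].
- move=> x y z [Rxy nxy] [Ryz nyz]; split; first exact: Rtrans Rxy Ryz.
  by move=> exz; subst z; apply/nxy/Ranti; rewrite // Rxy Ryz.
- move=> x y _ _; have [->|nxy] := pselect (x = y); first by left.
  by right; have /orP[] := Rtot x y isT isT; [left|right]; split=> // /esym.
- move=> B _ [x Bx]; have [|m [[/asboolP Bm lbm] _]] :=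
    wR (mem (fun x : {classic X} => `[< B x >])).
    by exists x; apply/asboolP.
  exists m; split=> // y By [Rym nym]; apply/nym/Ranti; rewrite // Rym.
  exact/lbm/asboolP.
Qed.

Lemma strict_wellorder_restrict (X : Type) (A : X -> Prop) lt :
  strict_wellorder (fun _ => True) lt -> strict_wellorder A lt.
Proof.
move=> [ir [tr [to mi]]]; split; [|split; [|split]] => //.
- by move=> x y _ _; apply: to.
- by move=> B _; apply: mi.
Qed.

Lemma strict_wellorder_lexi (X Y : Type) (A : X -> Prop) (B : Y -> Prop) (r : X -> Y)
    (ltY : Y -> Y -> Prop) (ltX : X -> X -> Prop) :
  strict_wellorder B ltY -> strict_wellorder (fun _ => True) ltX ->
  (forall x, A x -> B (r x)) ->
  strict_wellorder A (fun x x' => ltY (r x) (r x') \/ (r x = r x' /\ ltX x x')).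
Proof.
move=> [irY [trY [toY miY]]] [irX [trX [toX miX]]] AB; split; [|split; [|split]].
- by move=> x [/irY|[_ /irX]].
- move=> x y z [h1|[e1 h1]] [h2|[e2 h2]].
  + by left; apply: trY h1 h2.
  + by left; rewrite -e2.
  + by left; rewrite e1.
  + by right; split; [rewrite e1 e2|apply: trX h1 h2].
- move=> x y Ax Ay.
  case: (toY _ _ (AB _ Ax) (AB _ Ay)) => [e|[h|h]]; last 2 first.
  + by right; left; left.
  + by right; right; left.
  by case: (toX x y I I) => [->|[h|h]]; [left|right; left; right|right; right; right].
- move=> C CA [x Cx].
  have sub y : (exists x, C x /\ r x = y) -> B y by move=> [x0 [/CA/AB ? <-]].
  have [_ [[x' [Cx' <-]] mm']] := miY _ sub (ex_intro _ _ (ex_intro _ x (conj Cx erefl))).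
  have [m [[Cm em] mm]] := miX (fun x => C x /\ r x = r x') (fun _ _ => I)
    (ex_intro _ x' (conj Cx' erefl)).
  exists m; split => // y Cy [h|[e h]].
  + by apply: (mm' (r y)) => //; [exists y | rewrite -em].
  + by apply: (mm y) => //; split => //; rewrite e.
Qed.

Definition injective_on (X Y : Type) (A : X -> Prop) (f : X -> Y) :=
  forall x y, A x -> A y -> f x = f y -> x = y.

Section CardLeSucc.
Context {K : Type}.

Lemma card_le_succ_inj m : forall (X Y : Type) (A : X -> Prop) (B : Y -> Prop) (f : X -> Y),
  (forall x, A x -> B (f x)) -> injective_on A f ->
  card_le_succ m B K -> card_le_succ m A K.
Proof.
elim: m => [|m IH] X Y A B f AB inj /=.
  move=> [g gi]; exists (fun x => g (f x)) => x y Ax Ay e.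
  by apply: inj => //; apply: gi => //; apply: AB.
move=> [ltB [woB segB]]; have [ltX woX] := strict_wellorder_exists X.
exists (fun x x' => ltB (f x) (f x') \/ (f x = f x' /\ ltX x x')); split.
  exact: strict_wellorder_lexi woB woX AB.
move=> a Aa; apply: (IH _ _ _ _ f _ _ (segB _ (AB _ Aa))).
- move=> x [Ax [h|[e h]]]; first by split => //; apply: AB.
  by have exa := inj _ _ Ax Aa e; subst x; case: woX => /(_ a).
- by move=> x y [Ax _] [Ay _]; apply: inj.
Qed.

Lemma card_le_succ_sub m (X : Type) (A B : X -> Prop) :
  (forall x, A x -> B x) -> card_le_succ m B K -> card_le_succ m A K.
Proof. by move=> AB; apply: (@card_le_succ_inj m X X A B (fun x => x) AB) => x y _ _. Qed.

Lemma card_le_succ_le m m' (X : Type) (A : X -> Prop) :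
  m <= m' -> card_le_succ m A K -> card_le_succ m' A K.
Proof.
elim: m' => [|m' IH]; first by rewrite leqn0 => /eqP ->.
rewrite leq_eqVlt => /orP[/eqP -> //|/IH{}IH /IH LA].
have [lt wo] := strict_wellorder_exists X; exists lt; split.
  exact: strict_wellorder_restrict.
by move=> a _; apply: card_le_succ_sub LA => x [].
Qed.

Lemma card_le_succ_empty m (X : Type) (A : X -> Prop) :
  inhabited K -> (forall x, ~ A x) -> card_le_succ m A K.
Proof.
move=> [k0] nA; apply: (card_le_succ_le (m := 0)) => //.
by exists (fun _ => k0) => x y /nA.
Qed.

Lemma card_le_succ_segments (U : Type) (lt : U -> U -> Prop) n (W : U -> Prop) :
  strict_wellorder (fun _ => True) lt -> inhabited K ->
  (forall b, W b -> exists2 i, i < n & card_le_succ i (fun y => lt y b) K) ->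
  card_le_succ n W K.
Proof.
move=> wo iK hW; case: n hW => [|n] hW.
  by apply: card_le_succ_empty => // x /hW [].
exists lt; split; first exact: strict_wellorder_restrict.
move=> b /hW [i li Li].
by apply: (card_le_succ_sub (B := fun y => lt y b)) => [x []|]; last exact: card_le_succ_le Li.
Qed.

End CardLeSucc.

(* Sequences of length k in Y, coded as functions on nat that are constantly v0 from k on. *)
Definition padded_seqs (V : Type) (v0 : V) (k : nat) (Y : V -> Prop) (g : nat -> V) :=
  (forall j, j < k -> Y (g j)) /\ (forall j, k <= j -> g j = v0).

Lemma padded_seqs_ext (V : Type) (v0 : V) k Y g g' :
  padded_seqs v0 k Y g -> padded_seqs v0 k Y g' ->
  (forall j, j < k -> g j = g' j) -> g = g'.
Proof.
move=> [_ h1] [_ h2] e; apply: funext => j.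
by case: (ltnP j k) => [/e //|kj]; rewrite h1 // h2.
Qed.

(** * Finite cardinalities *)

Definition card_le_nat (X : Type) (A : X -> Prop) (t : nat) :=
  exists2 f : X -> nat, (forall x, A x -> f x < t) & injective_on A f.

Definition distinct_in (X : Type) (A : X -> Prop) (t : nat) (g : nat -> X) :=
  (forall j, j < t -> A (g j)) /\ (forall i j, i < t -> j < t -> g i = g j -> i = j).

Definition card_ge_nat (X : Type) (A : X -> Prop) (t : nat) :=
  exists g : nat -> X, distinct_in A t g.

Lemma card_le_nat_of_not_ge k : forall (X : Type) (A : X -> Prop),
  ~ card_ge_nat A k -> card_le_nat A k.
Proof.
elim: k => [|k IH] X A nge.
  by exists (fun _ => 0) => [x Ax|x y Ax]; case: nge; exists (fun _ => x).
have [[x0 Ax0]|nA] := pselect (exists x, A x); last first.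
  by exists (fun _ => 0) => [x Ax|x y Ax]; case: nA; exists x.
have [|e eb ei] := IH _ (fun x => A x /\ x <> x0).
  move=> [g [Ag gi]]; apply: nge; exists (fun j => if j == k then x0 else g j); split.
    move=> j; rewrite ltnS leq_eqVlt => /orP[/eqP ->|lj]; first by rewrite eqxx.
    by rewrite (ltn_eqF lj); case: (Ag j lj).
  move=> i j; rewrite [i < _]ltnS [j < _]ltnS [i <= _]leq_eqVlt [j <= _]leq_eqVlt.
  move=> /orP[/eqP->|li] /orP[/eqP->|lj].
  - by [].
  - by rewrite eqxx (ltn_eqF lj) => e; case: (Ag j lj) => _ /(_ (esym e)).
  - by rewrite eqxx (ltn_eqF li) => e; case: (Ag i li) => _ /(_ e).
  - by rewrite (ltn_eqF li) (ltn_eqF lj); apply: gi.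
exists (fun x => if pselect (x = x0) then k else e x).
  by move=> x Ax; case: pselect => [//|nx]; apply/leqW/eb.
move=> x y Ax Ay; case: pselect => [ex|nx]; case: pselect => [ey|ny] /= ek.
- by rewrite ex ey.
- by have := eb y (conj Ay ny); rewrite -ek ltnn.
- by have := eb x (conj Ax nx); rewrite ek ltnn.
- exact: ei.
Qed.

Lemma card_ge_nat_not_le (X : Type) (A : X -> Prop) t t' :
  t' < t -> card_ge_nat A t -> ~ card_le_nat A t'.
Proof.
move=> lt [g [Ag gi]] [f fb fi].
pose h (i : 'I_t) : 'I_t' := Ordinal (fb _ (Ag i (ltn_ord i))).
have hi : injective h.
  move=> i j [] /(fi _ _ (Ag _ (ltn_ord i)) (Ag _ (ltn_ord j))).
  by move/(gi _ _ (ltn_ord i) (ltn_ord j))/val_inj.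
by have := leq_card h hi; rewrite !card_ord leqNgt lt.
Qed.

Lemma card_le_nat_inj (X Y : Type) (A : X -> Prop) (B : Y -> Prop) (f : X -> Y) t :
  (forall x, A x -> B (f x)) -> injective_on A f -> card_le_nat B t -> card_le_nat A t.
Proof.
move=> AB fi [g gb gi]; exists (fun x => g (f x)) => [x /AB/gb //|x y Ax Ay e].
by apply: fi => //; apply: gi => //; apply: AB.
Qed.

Lemma mixed_radix_inj a b a' b' t :
  b < t -> b' < t -> a * t + b = a' * t + b' -> a = a' /\ b = b'.
Proof.
move=> lb lb' e; have t0 : 0 < t by apply: leq_ltn_trans lb.
have := congr1 (divn^~ t) e; have := congr1 (modn^~ t) e.
by rewrite !divnMDl // !divn_small // !addn0 !modnMDl !modn_small.
Qed.

Lemma mixed_radix_lt a b t n : a < n -> b < t -> a * t + b < n * t.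
Proof.
move=> an bt; apply: (@leq_trans (a * t + t)); first by rewrite ltn_add2l.
by rewrite -mulSnr leq_mul2r an orbT.
Qed.

Lemma card_le_nat_setX (X Z : Type) (A : X -> Prop) (B : Z -> Prop) a b :
  card_le_nat A a -> card_le_nat B b ->
  card_le_nat (fun p : X * Z => A p.1 /\ B p.2) (a * b).
Proof.
move=> [f fb fi] [g gb gi]; exists (fun p => f p.1 * b + g p.2).
  by move=> [x z] [/fb Ax /gb Bz]; apply: mixed_radix_lt.
move=> [x z] [x' z'] [Ax Bz] [Ax' Bz'] /= /(mixed_radix_inj (gb _ Bz) (gb _ Bz')) [e1 e2].
by move: (fi _ _ Ax Ax' e1) (gi _ _ Bz Bz' e2) => /= -> ->.
Qed.

Lemma card_le_nat_setU (X : Type) (A B : X -> Prop) a b :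
  card_le_nat A a -> card_le_nat B b -> card_le_nat (fun x => A x \/ B x) (a + b).
Proof.
move=> [f fb fi] [g gb gi].
have AorB x : A x \/ B x -> ~ A x -> B x by case.
exists (fun x => if pselect (A x) then f x else a + g x).
  move=> x hx; case: pselect => [Ax|nAx] /=.
    by have := fb _ Ax; lia.
  by have := gb _ (AorB _ hx nAx); lia.
move=> x y hx hy; case: pselect => [Ax|nAx]; case: pselect => [Ay|nAy] /= e.
- exact: fi.
- by have := fb _ Ax; lia.
- by have := fb _ Ay; lia.
- by apply: gi; [apply: AorB hx nAx|apply: AorB hy nAy|apply/(@addnI a)].
Qed.

Lemma card_le_nat_bigcup (X : Type) (t : nat -> nat) n (Y : nat -> X -> Prop) :
  (forall i, i < n -> card_le_nat (Y i) (t i)) ->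
  card_le_nat (fun x => exists2 i, i < n & Y i x) (\sum_(i < n) t i).
Proof.
elim: n => [|n IH] hY.
  by exists (fun _ => 0) => [x []|x y []].
rewrite big_ord_recr /=.
have := card_le_nat_setU (IH (fun i li => hY i (leqW li))) (hY n (ltnSn _)).
apply: (card_le_nat_inj (f := fun x => x)) => [x [i]|//].
by rewrite ltnS leq_eqVlt => /orP[/eqP->|li] Yi; [right|left; exists i].
Qed.

Section DigitsCode.
Variables (V : Type) (Y : V -> Prop) (f : V -> nat) (t : nat).
Hypotheses (fb : forall x, Y x -> f x < t) (fi : injective_on Y f).

Fixpoint digits_code (i : nat) (g : nat -> V) : nat :=
  if i is i'.+1 then digits_code i' g * t + f (g i') else 0.

Lemma digits_code_lt i g : (forall j, j < i -> Y (g j)) -> digits_code i g < expn t i.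
Proof.
elim: i => [//|i IH] Yg /=; rewrite expnSr.
by apply: mixed_radix_lt; [apply: IH => j /leqW/Yg|apply/fb/Yg].
Qed.

Lemma digits_code_inj i g g' :
  (forall j, j < i -> Y (g j) /\ Y (g' j)) ->
  digits_code i g = digits_code i g' -> forall j, j < i -> g j = g' j.
Proof.
elim: i => [//|i IH] Yg /=; have [Y1 Y2] := Yg i (ltnSn _).
move/(mixed_radix_inj (fb Y1) (fb Y2)) => [e1 e2] j.
rewrite ltnS leq_eqVlt => /orP[/eqP ->|lj]; first exact: fi.
by apply: IH lj => // j' /leqW/Yg.
Qed.

End DigitsCode.

Lemma card_le_nat_padded_seqs (V : Type) (v0 : V) k (Y : V -> Prop) t :
  card_le_nat Y t -> card_le_nat (padded_seqs v0 k Y) (expn t k).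
Proof.
move=> [f fb fi]; exists (digits_code f t k) => [g [Yg _]|g g' Fg Fg' e].
  exact: digits_code_lt fb _ _ Yg.
apply: (padded_seqs_ext Fg Fg'); apply: (digits_code_inj fb fi _ e).
by move=> j lj; split; [apply: Fg.1|apply: Fg'.1].
Qed.

Lemma fiber_index_exists (X Y : Type) (A : X -> Prop) (f : X -> Y) k :
  (forall y, ~ card_ge_nat (fun x => A x /\ f x = y) k) ->
  exists2 E : X -> nat, (forall x, A x -> E x < k) & injective_on A (fun x => (f x, E x)).
Proof.
move=> nge; have Ey y := cid2 (card_le_nat_of_not_ge (nge y)).
exists (fun x => sval (Ey (f x)) x) => [x Ax|x y Ax Ay [efxy]].
  by case: (Ey (f x)) => e /= eb _; apply: eb.
by rewrite -efxy; case: (Ey (f x)) => e /= _ ei; apply: ei.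
Qed.

Lemma card_le_nat_finite_fibers (X Y : Type) (A : X -> Prop) (B : Y -> Prop) (f : X -> Y) k t :
  (forall x, A x -> B (f x)) -> (forall y, ~ card_ge_nat (fun x => A x /\ f x = y) k) ->
  card_le_nat B t -> card_le_nat A (t * k).
Proof.
move=> AB /fiber_index_exists [E Eb Ei] LB.
have Lk : card_le_nat (fun n => n < k) k by exists (fun n => n).
apply: (card_le_nat_inj _ Ei (card_le_nat_setX LB Lk)).
by move=> x Ax; split; [apply: AB|apply: Eb].
Qed.

Lemma card_le_nat_image (X : Type) (g : nat -> X) t :
  card_le_nat (fun u => exists2 j, j < t & g j = u) t.
Proof.
have [f fP] := choice_default 0 (fun u j => j < t /\ g j = u).
have fP' u : (exists2 j, j < t & g j = u) -> f u < t /\ g (f u) = u.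
  by move=> [j lj gj]; apply: fP; exists j.
exists f => [u /fP' []//|u v /fP' [_ gu] /fP' [_ gv] e].
by rewrite -gu -gv e.
Qed.

Lemma finite_or_nat_injection (K : Type) (k0 : K) :
  (exists m, card_le_nat (fun _ : K => True) m) \/ exists e : nat -> K, injective e.
Proof.
have [|nF] := pselect (exists m, card_le_nat (fun _ : K => True) m); [by left|right].
have /choice[new newP] : forall l : seq {classic K}, exists x : {classic K}, x \notin l.
  move=> l; apply: contrapT => nl; apply: nF; exists (size l).
  have inl x : x \in l by apply: contrapT => nx; apply: nl; exists x; apply/negP.
  exists (fun x => index (x : {classic K}) l) => [x _|x y _ _ e]; first by rewrite index_mem.
  by rewrite -(nth_index (k0 : {classic K}) (inl x)) -(nth_index (k0 : {classic K}) (inl y)) e.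
pose fix prefix n := if n is n'.+1 then new (prefix n') :: prefix n' else [::].
have prefixP i j : i < j -> new (prefix i) \in prefix j.
  elim: j => [//|j IH]; rewrite ltnS leq_eqVlt => /orP[/eqP ->|/IH lj].
    exact: mem_head.
  by rewrite in_cons lj orbT.
exists (fun n => new (prefix n)) => i j e; case: (ltngtP i j) => [lij|lji|//].
  by have := newP (prefix j); rewrite -e prefixP.
by have := newP (prefix i); rewrite e prefixP.
Qed.

(** * Hessenberg's theorem *)

Lemma zorn_above (T : Type) (P : (T -> Prop) -> Prop) (B0 : T -> Prop) :
  P B0 ->
  (forall F : (T -> Prop) -> Prop, (forall X, F X -> P X /\ forall t, B0 t -> X t) ->
    (forall X Y, F X -> F Y -> (forall t, X t -> Y t) \/ (forall t, Y t -> X t)) ->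
    (exists X, F X) -> P (fun t => exists2 X, F X & X t)) ->
  exists M, [/\ P M, forall t, B0 t -> M t &
    forall B, (forall t, M t -> B t) -> P B -> forall t, B t -> M t].
Proof.
move=> PB0 Pchain.
have setE (A B : T -> Prop) : (forall t, A t <-> B t) -> A = B.
  by move=> AB; apply/funext => t; apply/propext.
pose PU X := P (fun t => X t \/ B0 t).
have [F FP Ftot|M [PM Mmax]] := @classical_sets.Zorn_bigcup T PU.
  set U := (fun t => (exists2 X, F X & X t) \/ B0 t); change (P U).
  have [[X FX]|F0] := pselect (exists X, F X); last first.
    rewrite (setE U B0) // => t; split=> [[[X FX]|//]|]; last by right.
    by case: F0; exists X.
  pose FU Y := exists2 X, F X & Y = (fun t => X t \/ B0 t).
  rewrite (setE U (fun t => exists2 Y, FU Y & Y t)).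
    apply: Pchain => [Y [Z FZ ->]|Y Y' [Z FZ ->] [Z' FZ' ->]|].
    - by split; [exact: FP|right].
    - by case: (Ftot _ _ FZ FZ') => sZ; [left|right] => t [/sZ|]; auto.
    - by exists (fun t => X t \/ B0 t), X.
  move=> t; split=> [[[Z FZ Zt]|B0t]|[Y [Z FZ ->] [Zt|B0t]]]; last 2 first.
  - by left; exists Z.
  - by right.
  - by exists (fun t => Z t \/ B0 t); [exists Z|left].
  - by exists (fun t => X t \/ B0 t); [exists X|right].
exists (fun t => M t \/ B0 t); split=> // [t|B MB PB t Bt]; first by right.
apply: contrapT => nMt; apply: (Mmax B).
  by split=> [s Ms|/(_ t Bt) Mt]; [apply: MB; left|apply: nMt; left].
rewrite /PU (setE (fun t => B t \/ B0 t) B) // => s.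
by split=> [[//|B0s]|]; [exact: MB (or_intror B0s)|left].
Qed.

(* Partial bijections between A and B, ordered by inclusion of graphs, have a maximal
   element; it is total on A or onto B. *)
Lemma card_comparable (X Y : Type) (A : X -> Prop) (B : Y -> Prop) (x0 : X) (y0 : Y) :
  (exists2 f : X -> Y, (forall x, A x -> B (f x)) & injective_on A f) \/
  (exists2 g : Y -> X, (forall y, B y -> A (g y)) & injective_on B g).
Proof.
pose pbij (M : X * Y -> Prop) := [/\ forall p, M p -> A p.1 /\ B p.2,
  forall p q, M p -> M q -> p.1 = q.1 -> p.2 = q.2 &
  forall p q, M p -> M q -> p.2 = q.2 -> p.1 = q.1].
have [||M [[MAB Mf Mi] _ Mmax]] := @zorn_above _ pbij (fun _ => False).
- by split.
- move=> F FP Ftot _.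
  have common M1 M2 p q : F M1 -> F M2 -> M1 p -> M2 q -> exists2 M, F M & M p /\ M q.
    move=> F1 F2 p1 q2; case: (Ftot _ _ F1 F2) => s.
      by exists M2 => //; split=> //; apply: s.
    by exists M1 => //; split=> //; apply: s.
  split=> [p [M FM Mp]|p q [M1 F1 p1] [M2 F2 q2]|p q [M1 F1 p1] [M2 F2 q2]].
  + by case: (FP M FM) => -[MAB _ _] _; apply: MAB.
  + have [M FM [Mp Mq]] := common _ _ _ _ F1 F2 p1 q2.
    by case: (FP M FM) => -[_ Mf _] _; apply: Mf.
  + have [M FM [Mp Mq]] := common _ _ _ _ F1 F2 p1 q2.
    by case: (FP M FM) => -[_ _ Mi] _; apply: Mi.
have [f fP] := choice_default y0 (fun a b => M (a, b)).
have [g gP] := choice_default x0 (fun b a => M (a, b)).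
have [allA|nA] := pselect (forall a, A a -> exists b, M (a, b)).
  left; exists f => [x /allA/fP/MAB [] //|x y /allA/fP Mx /allA/fP My e].
  exact: Mi Mx My e.
have [allB|nB] := pselect (forall b, B b -> exists a, M (a, b)).
  right; exists g => [y /allB/gP/MAB [] //|x y /allB/gP Mx /allB/gP My e].
  exact: Mf Mx My e.
have [a [Aa na]] : exists a, A a /\ ~ exists b, M (a, b).
  apply: contrapT => h; apply: nA => a Aa; apply: contrapT => nb.
  by apply: h; exists a.
have [b [Bb nb]] : exists b, B b /\ ~ exists a, M (a, b).
  apply: contrapT => h; apply: nB => b Bb; apply: contrapT => na'.
  by apply: h; exists b.
exfalso; apply: (na); exists b.
apply: (Mmax (fun p => M p \/ p = (a, b))); [by left| |by right].
split=> [p [/MAB //|-> //]| |] [p1 p2] [q1 q2] [Mp|[-> ->]] [Mq|[-> ->]] //= e.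
- exact: Mf Mp Mq e.
- by case: na; exists p2; rewrite -e.
- by case: na; exists q2; rewrite e.
- exact: Mi Mp Mq e.
- by case: nb; exists p1; rewrite -e.
- by case: nb; exists q1; rewrite e.
Qed.

Section Pairing.
Variable K : Type.
Implicit Type G : (K * K) * K -> Prop.

(* Graphs of injective maps S x S -> S, where S is the set of points occurring in the
   graph; Zorn's lemma is applied to these. *)
Definition pairing_support G (x : K) :=
  exists2 t, G t & [\/ t.1.1 = x, t.1.2 = x | t.2 = x].

Definition pairing_graph G :=
  [/\ forall t u, G t -> G u -> t.1 = u.1 -> t.2 = u.2,
      forall t u, G t -> G u -> t.2 = u.2 -> t.1 = u.1 &
      forall x y, pairing_support G x -> pairing_support G y -> exists z, G ((x, y), z)].

Lemma pairing_graph_union (F : ((K * K) * K -> Prop) -> Prop) :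
  (forall G, F G -> pairing_graph G) ->
  (forall G G', F G -> F G' -> (forall t, G t -> G' t) \/ (forall t, G' t -> G t)) ->
  pairing_graph (fun t => exists2 G, F G & G t).
Proof.
move=> FP Ftot.
have common G1 G2 t u : F G1 -> F G2 -> G1 t -> G2 u -> exists2 G, F G & G t /\ G u.
  move=> F1 F2 t1 u2; case: (Ftot _ _ F1 F2) => s.
    by exists G2 => //; split=> //; apply: s.
  by exists G1 => //; split=> //; apply: s.
split.
- move=> t u [G1 F1 t1] [G2 F2 u2]; have [G FG [Gt Gu]] := common _ _ _ _ F1 F2 t1 u2.
  by case: (FP G FG) => + _ _; apply.
- move=> t u [G1 F1 t1] [G2 F2 u2]; have [G FG [Gt Gu]] := common _ _ _ _ F1 F2 t1 u2.
  by case: (FP G FG) => _ + _; apply.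
move=> x y [t [G1 F1 t1] cx] [u [G2 F2 u2] cy].
have [G FG [Gt Gu]] := common _ _ _ _ F1 F2 t1 u2.
have [z Gz] : exists z, G ((x, y), z) by case: (FP G FG) => _ _; apply; [exists t|exists u].
by exists z, G.
Qed.

Definition pairing_on (S : K -> Prop) (p : K * K -> K) :=
  (forall x y, S x -> S y -> S (p (x, y))) /\
  (forall x y x' y', S x -> S y -> S x' -> S y' ->
     p (x, y) = p (x', y') -> x = x' /\ y = y').

Lemma pairing_graph_fun G (p : K * K -> K) :
  pairing_graph G ->
  (forall x y, pairing_support G x -> pairing_support G y -> G ((x, y), p (x, y))) ->
  pairing_on (pairing_support G) p.
Proof.
move=> [_ Gi _] Gp; split=> [x y Sx Sy|x y x' y' Sx Sy Sx' Sy' e].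
  by exists ((x, y), p (x, y)); [apply: Gp|constructor 3].
by case: (Gi _ _ (Gp _ _ Sx Sy) (Gp _ _ Sx' Sy') e).
Qed.

(* K injects into S by x |-> p (x, a) on S and x |-> p (q x, b) off S. *)
Lemma absorbing_of_pairing (S : K -> Prop) (p : K * K -> K) a b (q : K -> K) :
  pairing_on S p -> S a -> S b -> a <> b ->
  (forall x, ~ S x -> S (q x)) -> injective_on (fun x => ~ S x) q ->
  exists h : K * K -> K, injective h.
Proof.
move=> [pS pinj] Sa Sb ab qS qi.
pose j x := if pselect (S x) then p (x, a) else p (q x, b).
have jS x : S (j x) by rewrite /j; case: pselect => Sx; apply: pS => //; apply: qS.
have ji : injective j.
  move=> x y; rewrite /j; case: pselect => Sx; case: pselect => Sy /= e.
  - by case: (pinj _ _ _ _ Sx Sa Sy Sa e).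
  - by case: (pinj _ _ _ _ Sx Sa (qS _ Sy) Sb e) => _ /ab.
  - by case: (pinj _ _ _ _ (qS _ Sx) Sb Sy Sa e) => _ /esym/ab.
  - by case: (pinj _ _ _ _ (qS _ Sx) Sb (qS _ Sy) Sb e) => /(qi _ _ Sx Sy).
exists (fun z => p (j z.1, j z.2)) => [[x y] [x' y']] /= e.
by case: (pinj _ _ _ _ (jS x) (jS y) (jS x') (jS y') e) => /ji -> /ji ->.
Qed.

(* Extending a pairing on S by an injection f of S into its complement: pairs of
   points of S or f(S), not both in S, are sent injectively into S by pairing their
   retractions onto S together with a tag telling which of them lie in S, then
   moved out of S by f. *)
Lemma pairing_graph_extend G (p : K * K -> K) (e : nat -> K) (f : K -> K) :
  let S := pairing_support G in
  pairing_graph G -> (forall x y, S x -> S y -> G ((x, y), p (x, y))) ->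
  injective e -> (forall i, S (e i)) ->
  (forall x, S x -> ~ S (f x)) -> injective_on S f ->
  exists G', [/\ pairing_graph G', forall t, G t -> G' t & exists t, G' t /\ ~ G t].
Proof.
move=> S hG Gp ei eS fS fi; have [Gf Gi _] := hG.
have [pS pinj] := pairing_graph_fun hG Gp.
pose T x := exists2 s, S s & f s = x.
have TnS x : T x -> ~ S x by move=> [s Ss <-]; apply: fS.
have [finv finvP] := choice_default (e 0) (fun x s => S s /\ f s = x).
pose r x := if pselect (S x) then x else finv x.
have rS x : S x \/ T x -> S (r x).
  move=> hx; rewrite /r; case: pselect => [//|nSx] /=.
  by case: hx => [//|[s Ss fs]]; case: (finvP x) => //; exists s.
have rT x : T x -> f (r x) = x.
  move=> Tx; rewrite /r; case: pselect => [/(TnS _ Tx) //|_] /=.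
  by case: Tx => s Ss fs; case: (finvP x) => //; exists s.
have rSx x : S x -> r x = x by rewrite /r; case: pselect.
pose tag x y := e (if pselect (S x) then 1 else if pselect (S y) then 0 else 2).
pose code x y := p (p (r x, r y), tag x y).
pose ST x := S x \/ T x.
have codeS x y : ST x -> ST y -> S (code x y).
  by move=> STx STy; apply: (pS _ _ _ (eS _)); apply: (pS _ _ (rS _ _) (rS _ _)).
have r_inj x x' : ST x -> ST x' -> (S x <-> S x') -> r x = r x' -> x = x'.
  move=> [Sx|Tx] [Sx'|Tx'] SS' rx.
  - by rewrite -(rSx x Sx) -(rSx x' Sx').
  - by case: (TnS _ Tx'); apply/SS'.
  - by case: (TnS _ Tx); apply/SS'.
  - by rewrite -(rT _ Tx) -(rT _ Tx') rx.
have code_inj x y x' y' : ST x -> ST y -> ST x' -> ST y' ->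
    ~ (S x /\ S y) -> ~ (S x' /\ S y') -> code x y = code x' y' -> x = x' /\ y = y'.
  move=> STx STy STx' STy' nxy nxy' e'.
  have [e1 /ei] := pinj _ _ _ _ (pS _ _ (rS _ STx) (rS _ STy)) (eS _)
    (pS _ _ (rS _ STx') (rS _ STy')) (eS _) e'.
  have [/(r_inj _ _ STx STx') rx /(r_inj _ _ STy STy') ry] :=
    pinj _ _ _ _ (rS _ STx) (rS _ STy) (rS _ STx') (rS _ STy') e1.
  case: (pselect (S x)) => Sx; case: (pselect (S y)) => Sy;
    case: (pselect (S x')) => Sx'; case: (pselect (S y')) => Sy' //= _;
    by split; [apply: rx|apply: ry]; tauto.
pose New t := [/\ ST t.1.1, ST t.1.2, ~ (S t.1.1 /\ S t.1.2) & t.2 = f (code t.1.1 t.1.2)].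
have GS t : G t -> [/\ S t.1.1, S t.1.2 & S t.2].
  by move=> Gt; split; exists t => //; [constructor 1|constructor 2|constructor 3].
have suppST x : pairing_support (fun t => G t \/ New t) x -> ST x.
  move=> [t [/GS [S1 S2 S3]|[ST1 ST2 _ ->]]] [<-|<-|<-]; try by left.
  - exact: ST1.
  - exact: ST2.
  - by right; exists (code t.1.1 t.1.2) => //; apply: codeS.
exists (fun t => G t \/ New t); split=> [|t|]; [split| by left|].
- move=> t u [Gt|[_ _ nS ->]] [Gu|[_ _ nS' ->]] e1.
  + exact: Gf Gt Gu e1.
  + by case: nS'; rewrite -e1; case: (GS _ Gt).
  + by case: nS; rewrite e1; case: (GS _ Gu).
  + by rewrite e1.
- move=> t u [Gt|[ST1 ST2 nS e2]] [Gu|[ST1' ST2' nS' e2']] et.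
  + exact: Gi Gt Gu et.
  + by case: (GS _ Gt) => _ _; rewrite et e2' => /(fS _ (codeS _ _ ST1' ST2')).
  + by case: (GS _ Gu) => _ _; rewrite -et e2 => /(fS _ (codeS _ _ ST1 ST2)).
  + move: et; rewrite e2 e2' => /(fi _ _ (codeS _ _ ST1 ST2) (codeS _ _ ST1' ST2')).
    case/code_inj => // e1 e1'.
    by case: t u {ST1 ST2 nS e2 ST1' ST2' nS' e2'} e1 e1' => [[? ?] ?] [[? ?] ?] /= -> ->.
- move=> x y /suppST STx /suppST STy.
  have [[Sx Sy]|nxy] := pselect (S x /\ S y).
    by exists (p (x, y)); left; apply: Gp.
  by exists (f (code x y)); right.
have STf0 : ST (f (e 0)) by right; exists (e 0).
have nSf0 : ~ S (f (e 0)) := fS _ (eS 0).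
exists ((f (e 0), f (e 0)), f (code (f (e 0)) (f (e 0)))).
by split=> [|/GS [/nSf0]//]; right; split=> // -[/nSf0].
Qed.

End Pairing.

Definition infinite_absorbing (K : Type) :=
  (exists h : K * K -> K, injective h) /\ (exists e : nat -> K, injective e).

(* A maximal pairing graph extending a pairing of e(nat) has a support S whose
   complement injects into S: otherwise S injects into its complement and the graph
   extends further. *)
Lemma infinite_absorbing_of_nat (K : Type) (e : nat -> K) :
  injective e -> infinite_absorbing K.
Proof.
move=> ei; split; last by exists e.
pose G0 (t : (K * K) * K) := exists i j, t = ((e i, e j), e (pickle (i, j))).
have [||M [PM G0M Mmax]] := @zorn_above _ (@pairing_graph K) G0.
- have G0e x : pairing_support G0 x -> exists i, x = e i.
    by move=> [t [i [j ->]] [<-|<-|<-]]; eexists.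
  split=> [t u [i [j ->]] [i' [j' ->]] [/ei -> /ei ->] //|t u [i [j ->]] [i' [j' ->]]|x y].
    by move=> /ei /(pcan_inj pickleK) [-> ->].
  by move=> /G0e [i ->] /G0e [j ->]; exists (e (pickle (i, j))), i, j.
- by move=> F FP Ftot _; apply: pairing_graph_union => [G /FP []|].
pose S := pairing_support M.
have eS i : S (e i).
  by exists ((e i, e i), e (pickle (i, i))); [apply: G0M; exists i, i|constructor 1].
have [p pP] := choice_default (e 0) (fun q z => M (q, z)).
have Mp x y : S x -> S y -> M ((x, y), p (x, y)).
  by move=> Sx Sy; apply: pP; case: PM => _ _; apply.
have [[f fS fi]|[q qS qi]] := card_comparable S (fun x => ~ S x) (e 0) (e 0).
  have [G' [PG' MG' [t [G't nMt]]]] := pairing_graph_extend PM Mp ei eS fS fi.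
  by case: nMt; apply: (Mmax G').
apply: (absorbing_of_pairing (pairing_graph_fun PM Mp) (eS 0) (eS 1) _ qS qi).
by move/ei.
Qed.

(** * Products and sequences below K^{+n} *)

Fixpoint wo_max (V : Type) (lt : V -> V -> Prop) (i : nat) (g : nat -> V) : V :=
  if i is i'.+1 then
    if pselect (lt (wo_max lt i' g) (g i)) then g i else wo_max lt i' g
  else g 0.

Lemma wo_maxP (V : Type) (Y : V -> Prop) lt : strict_wellorder Y lt ->
  forall i g, (forall j, j <= i -> Y (g j)) ->
  Y (wo_max lt i g) /\ forall j, j <= i -> g j = wo_max lt i g \/ lt (g j) (wo_max lt i g).
Proof.
move=> [_ [tr [to _]]]; elim=> [|i IH] g Yg.
  by split=> [|j]; [exact: Yg|rewrite leqn0 => /eqP ->; left].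
have [Ym hm] := IH g (fun j lj => Yg j (leqW lj)); rewrite /=.
case: pselect => [h|nh] /=; split=> [|j]; [exact: Yg| |done|].
  rewrite leq_eqVlt => /orP[/eqP ->|lj]; first by left.
  by right; case: (hm j lj) => [->|/tr]; last exact.
rewrite leq_eqVlt => /orP[/eqP ->|lj]; last exact: hm.
by case: (to _ _ (Yg _ (leqnn _)) Ym) => [->|[]]; [left|right|].
Qed.

Section InfiniteAbsorbing.
Variables (K : Type) (hK : infinite_absorbing K).

Let setX_closed m := forall (X Z : Type) (A : X -> Prop) (B : Z -> Prop),
  (exists f : Z -> K, injective_on B f) -> card_le_succ m A K ->
  card_le_succ m (fun p : X * Z => A p.1 /\ B p.2) K.

Let setU1_of_setX m : setX_closed m -> forall (X : Type) (A : X -> Prop) (a : X),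
  card_le_succ m A K -> card_le_succ m (fun x => A x \/ x = a) K.
Proof.
move=> closedX X A a LA; case: hK => _ [e ei].
have [[a0 Aa0]|nA] := pselect (exists a0, A a0); last first.
  apply: (card_le_succ_le (m := 0)) => //; exists (fun _ => e 0).
  by move=> x y [Ax|->] [Ay|->] //; case: nA; [exists x|exists x|exists y].
have eb : injective_on (fun _ : bool => True) (e \o nat_of_bool).
  by move=> b b' _ _ /ei; case: b; case: b'.
pose f x := if pselect (x = a) then (a0, true) else (x, false).
apply: (card_le_succ_inj (f := f) _ _ (closedX X bool A _ (ex_intro _ _ eb) LA)).
- by move=> x hx; rewrite /f; case: pselect => [//|nxa]; split => //; case: hx.
- by move=> x y _ _; rewrite /f; case: pselect => ?; case: pselect => ? /=; congruence.
Qed.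

Let setX_closedT m : setX_closed m.
Proof.
elim: m => [|m IH] X Z A B [fz fzi] /=.
  move=> [f fi]; case: hK => [[h hi] _].
  exists (fun p => h (f p.1, fz p.2)) => [[x1 z1] [x2 z2]] [A1 B1] [A2 B2] /= /hi [e1 e2].
  by move: (fi _ _ A1 A2 e1) (fzi _ _ B1 B2 e2) => /= -> ->.
move=> [ltA [woA segA]]; have [ltX woX] := strict_wellorder_exists (X * Z).
exists (fun p q => ltA p.1 q.1 \/ (p.1 = q.1 /\ ltX p q)); split.
  by apply: (strict_wellorder_lexi (r := fst)) woA woX _ => p [].
move=> q [Aq Bq]; have LA' := setU1_of_setX IH q.1 (segA _ Aq).
apply: card_le_succ_sub (IH X Z _ B (ex_intro _ fz fzi) LA').
by move=> p [[Ap Bp] [h|[e h]]]; split => //; [left|right].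
Qed.

Lemma card_le_succ_setX m (X Z : Type) (A : X -> Prop) (B : Z -> Prop) :
  (exists f : Z -> K, injective_on B f) -> card_le_succ m A K ->
  card_le_succ m (fun p : X * Z => A p.1 /\ B p.2) K.
Proof. exact: setX_closedT. Qed.

Lemma card_le_succ_setU1 m (X : Type) (A : X -> Prop) (a : X) :
  card_le_succ m A K -> card_le_succ m (fun x => A x \/ x = a) K.
Proof. exact/setU1_of_setX/setX_closedT. Qed.

Section PairCode.
Variables (V : Type) (Y : V -> Prop) (h : K * K -> K) (f : V -> K) (k0 : K).
Hypotheses (hi : injective h) (fi : injective_on Y f).

Fixpoint pair_code (i : nat) (g : nat -> V) : K :=
  if i is i'.+1 then h (pair_code i' g, f (g i')) else k0.

Lemma pair_code_inj i g g' : (forall j, j < i -> Y (g j) /\ Y (g' j)) ->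
  pair_code i g = pair_code i g' -> forall j, j < i -> g j = g' j.
Proof.
elim: i => [//|i IH] Yg /= /hi [ec ef] j.
rewrite ltnS leq_eqVlt => /orP[/eqP ->|lj]; first by case: (Yg i (ltnSn _)) => Y1 Y2; apply: fi.
by apply: IH lj => // j' /leqW/Yg.
Qed.

End PairCode.

(* Sequences are ordered by their largest entry first; those below a sequence q then
   have all entries in the initial segment of the largest entry of q, closed by that entry. *)
Lemma card_le_succ_padded_seqs m : forall (V : Type) (v0 : V) k (Y : V -> Prop),
  card_le_succ m Y K -> card_le_succ m (padded_seqs v0 k Y) K.
Proof.
elim: m => [|m IH] V v0 k Y /=.
  move=> [f fi]; case: hK => [[h hi] [e _]].
  exists (pair_code h f (e 0) k) => g g' Fg Fg' ec; apply: (padded_seqs_ext Fg Fg').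
  by apply: (pair_code_inj hi fi _ ec) => j lj; split; [exact: Fg.1|exact: Fg'.1].
move=> [ltY [woY segY]]; case: k => [|k].
  apply: (@card_le_succ_le _ 0 m.+1) => //; case: hK => [_ [e _]].
  by exists (fun _ => e 0) => g g' Fg Fg' _; apply: (padded_seqs_ext Fg Fg').
have [ltX woX] := strict_wellorder_exists (nat -> V).
have rY g : padded_seqs v0 k.+1 Y g -> Y (wo_max ltY k g) /\
    forall j, j <= k -> g j = wo_max ltY k g \/ ltY (g j) (wo_max ltY k g).
  by move=> [Fg _]; apply: (wo_maxP woY) => j lj; apply: Fg.
exists (fun g q => ltY (wo_max ltY k g) (wo_max ltY k q) \/
                  (wo_max ltY k g = wo_max ltY k q /\ ltX g q)); split.
  by apply: (strict_wellorder_lexi (r := wo_max ltY k)) woY woX _ => g /rY [].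
move=> q /rY [Yq _]; have LY' := card_le_succ_setU1 (wo_max ltY k q) (segY _ Yq).
apply: card_le_succ_sub (IH _ v0 k.+1 _ LY') => g [Fg hlt]; split; last by case: Fg.
move=> j lj; have [_ hg] := rY _ Fg; have Ygj := Fg.1 _ lj; case: woY => _ [tr _].
case: (hg j lj) => [egj|ltj]; case: hlt => [lr|[er _]].
- by left; split => //; rewrite egj.
- by right; rewrite egj.
- by left; split => //; apply: tr ltj lr.
- by left; split => //; rewrite -er.
Qed.

Lemma card_le_succ_finite_fibers m (X Y : Type) (A : X -> Prop) (B : Y -> Prop)
    (f : X -> Y) k :
  (forall x, A x -> B (f x)) -> (forall y, ~ card_ge_nat (fun x => A x /\ f x = y) k) ->
  card_le_succ m B K -> card_le_succ m A K.
Proof.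
move=> AB /fiber_index_exists [E Eb Ei] LB; case: (hK) => _ [e ei].
have ek : exists fz : nat -> K, injective_on (fun n => n < k) fz.
  by exists e => x y _ _ /ei.
apply: (card_le_succ_inj _ Ei (card_le_succ_setX ek LB)).
by move=> x Ax; split; [apply: AB|apply: Eb].
Qed.

End InfiniteAbsorbing.

(** * Monochromatic boxes *)

Section Boxes.
Variables (U K : Type) (u0 : U) (k : nat).

(* Points of U^n are coded as functions nat -> U that are u0 from n on; the k-box s of
   dimension n has the k distinct entries s i 0, ..., s i k.-1 on its i-th side. *)
Definition box_in n (X : nat -> U -> Prop) (s : nat -> nat -> U) :=
  forall i, i < n -> distinct_in (X i) k (s i).

Definition box_point n (s : nat -> nat -> U) (j : nat -> nat) : nat -> U :=
  fun i => if i < n then s i (j i) else u0.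

Definition monochromatic_box (c : (nat -> U) -> K) n s col :=
  forall j, (forall i, j i < k) -> c (box_point n s j) = col.

Definition box_trunc n (s : nat -> nat -> U) : nat -> nat -> U :=
  fun i j => if (i < n) && (j < k) then s i j else u0.

Definition slice (c : (nat -> U) -> K) n y (p : nat -> U) : K :=
  c (fun i => if i == n then y else p i).

Lemma box_in_sub n (X X' : nat -> U -> Prop) s :
  (forall i, i < n -> forall u, X' i u -> X i u) -> box_in n X' s -> box_in n X s.
Proof. by move=> XX' bs i li; have [Xs si] := bs i li; split=> // j /Xs/XX'; apply. Qed.

Lemma box_trunc_padded n X s : box_in n X s ->
  padded_seqs (fun _ => u0) n (padded_seqs u0 k (fun u => exists2 i, i < n & X i u))
    (box_trunc n s).
Proof.
move=> bs; split=> [i li|i ni]; last by apply: funext => j; rewrite /box_trunc ltnNge ni.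
split=> [j lj|j kj]; last by rewrite /box_trunc li ltnNge kj.
by rewrite /box_trunc li lj; exists i => //; apply: (bs i li).1.
Qed.

Lemma monochromatic_box_cons n X c (F : U -> (nat -> nat -> U) * K) v :
  (forall y, box_in n X (F y).1 /\ monochromatic_box (slice c n y) n (F y).1 (F y).2) ->
  card_ge_nat (fun y => X n y /\ (box_trunc n (F y).1, (F y).2) = v) k ->
  exists s col, box_in n.+1 X s /\ monochromatic_box c n.+1 s col.
Proof.
move=> HF [g [gX gi]]; have Fv j : j < k -> (box_trunc n (F (g j)).1, (F (g j)).2) = v.
  by case/gX.
exists (fun i => if i == n then g else v.1 i), v.2; split.
  move=> i; rewrite ltnS leq_eqVlt => /orP[/eqP ->|li]; rewrite ?eqxx.
    by split=> // j /gX [].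
  have v1E j : j < k -> v.1 i j = (F (g 0)).1 i j.
    by move=> lj; rewrite -(Fv 0 (leq_ltn_trans (leq0n j) lj)) /= /box_trunc li lj.
  have [Xs si] := (HF (g 0)).1 i li; rewrite (ltn_eqF li); split.
    by move=> j lj; rewrite v1E //; apply: Xs.
  by move=> j1 j2 l1 l2; rewrite !v1E //; apply: si.
move=> j hj; have Fy := Fv _ (hj n).
have := (HF (g (j n))).2 j hj; rewrite -Fy /= => <-.
congr c; apply: funext => i; rewrite /slice /box_point /box_trunc.
case: (eqVneq i n) => [->|nin]; first by rewrite ltnSn.
rewrite ltnS leq_eqVlt (negbTE nin) /=.
by case: (ltnP i n) => //= _; rewrite hj.
Qed.

Lemma monochromatic_box_step n X c :
  (forall y, exists s col, box_in n X s /\ monochromatic_box (slice c n y) n s col) ->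
  (exists s col, box_in n.+1 X s /\ monochromatic_box c n.+1 s col) \/
  exists2 G : U -> (nat -> nat -> U) * K,
    (forall y, padded_seqs (fun _ => u0) n
                 (padded_seqs u0 k (fun u => exists2 i, i < n & X i u)) (G y).1) &
    (forall v, ~ card_ge_nat (fun y => X n y /\ G y = v) k).
Proof.
move=> IH; have /choice[F HF] : forall y, exists sc : (nat -> nat -> U) * K,
    box_in n X sc.1 /\ monochromatic_box (slice c n y) n sc.1 sc.2.
  by move=> y; have [s [col h]] := IH y; exists (s, col).
have [[v kv]|nkv] := pselect (exists v,
    card_ge_nat (fun y => X n y /\ (box_trunc n (F y).1, (F y).2) = v) k).
  by left; apply: monochromatic_box_cons HF kv.
right; exists (fun y => (box_trunc n (F y).1, (F y).2)) => [y|v kv].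
  exact: box_trunc_padded (HF y).1.
by apply: nkv; exists v.
Qed.

End Boxes.

(* side_size k m n exceeds k times the number of labels of the n-th side: n-dimensional
   k-boxes over the earlier sides, at most (s^k)^n with s = side_size_sum k m n their
   total size, paired with the m colours. *)
Fixpoint side_size_sum (k m n : nat) : nat :=
  if n is n'.+1 then
    side_size_sum k m n' + (expn (expn (side_size_sum k m n') k) n' * m * k).+1
  else 0.

Definition side_size (k m n : nat) := (expn (expn (side_size_sum k m n) k) n * m * k).+1.

Lemma side_size_sumE k m n : side_size_sum k m n = \sum_(i < n) side_size k m i.
Proof. by elim: n => [|n IH]; rewrite ?big_ord0 // big_ord_recr /= -IH. Qed.

Lemma monochromatic_box_finite (K U : Type) (u0 : U) k m :
  card_le_nat (fun _ : K => True) m ->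
  forall n (X : nat -> U -> Prop), (forall i, i < n -> card_ge_nat (X i) (side_size k m i)) ->
  forall c : (nat -> U) -> K, exists s col, box_in k n X s /\ monochromatic_box u0 k c n s col.
Proof.
move=> LK; elim=> [|n IH] X hX c.
  by exists (fun _ _ => u0), (c (fun _ => u0)) => //; split => // j _.
have /choice[g Hg] : forall i, exists g : nat -> U,
    i < n -> distinct_in (X i) (side_size k m i) g.
  by move=> i; case: (ltnP i n) => [/ltnW/hX [gi ?]|_]; [exists gi|exists (fun _ => u0)].
pose X' i u := if i < n then exists2 j, j < side_size k m i & g i j = u else X i u.
have X'X i : i < n.+1 -> forall u, X' i u -> X i u.
  by move=> _ u; rewrite /X'; case: ltnP => [li [j /(Hg i li).1 ? <-]|].
have hX' i : i < n -> card_ge_nat (X' i) (side_size k m i).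
  by move=> li; exists (g i); rewrite /X' li; split=> [j lj|]; [exists j|apply: (Hg i li).2].
have [[s [col [bs ms]]]|[G Grange Gfib]] :=
    monochromatic_box_step (fun y => IH X' hX' (slice c n y)).
  by exists s, col; split => //; apply: box_in_sub bs.
have LW : card_le_nat (fun u => exists2 i, i < n & X' i u) (side_size_sum k m n).
  rewrite side_size_sumE; apply: card_le_nat_bigcup => i li.
  by rewrite /X' li; apply: card_le_nat_image.
have LB := card_le_nat_setX
  (card_le_nat_padded_seqs (fun _ => u0) n (card_le_nat_padded_seqs u0 k LW)) LK.
have LXn := card_le_nat_finite_fibers (fun y _ => conj (Grange y) I) Gfib LB.
exfalso; move: LXn; rewrite /X' ltnn; exact: card_ge_nat_not_le (ltnSn _) (hX n (ltnSn n)).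
Qed.

Definition downward_closed (U : Type) (lt : U -> U -> Prop) (D : U -> Prop) :=
  forall x y, D x -> lt y x -> D y.

(* Either D itself or the initial segment below the least point of D whose initial
   segment is large. *)
Lemma card_le_succ_shrink (K U : Type) (lt : U -> U -> Prop) i (D : U -> Prop) :
  strict_wellorder (fun _ => True) lt -> downward_closed lt D -> ~ card_le_succ i D K ->
  exists D', [/\ downward_closed lt D', forall x, D' x -> D x, ~ card_le_succ i D' K &
    forall b, D' b -> card_le_succ i (fun y => lt y b) K].
Proof.
move=> [_ [tr [_ mi]]] dD nD.
have [ex|nex] := pselect (exists a, D a /\ ~ card_le_succ i (fun y => lt y a) K).
  have [a [[Da na] ma]] := mi _ (fun _ _ => I) ex.
  exists (fun y => lt y a); split=> // [x y hx hy|x|b hb]; first exact: tr hy hx.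
    exact: dD.
  by apply: contrapT => nb; apply: (ma b) => //; split => //; apply: dD Da hb.
exists D; split=> // b Db.
by apply: contrapT => nb; apply: nex; exists b.
Qed.

Lemma monochromatic_box_infinite (K U : Type) (u0 : U) (lt : U -> U -> Prop) k :
  infinite_absorbing K -> strict_wellorder (fun _ => True) lt ->
  forall n (X : nat -> U -> Prop),
  (forall i, i < n -> downward_closed lt (X i) /\ ~ card_le_succ i (X i) K) ->
  forall c : (nat -> U) -> K, exists s col, box_in k n X s /\ monochromatic_box u0 k c n s col.
Proof.
move=> hK wo; elim=> [|n IH] X hX c.
  by exists (fun _ _ => u0), (c (fun _ => u0)) => //; split => // j _.
have /choice[D HD] : forall i, exists D : U -> Prop, i < n ->
    [/\ downward_closed lt D, forall u, D u -> X i u, ~ card_le_succ i D K &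
        forall b, D b -> card_le_succ i (fun y => lt y b) K].
  move=> i; case: (ltnP i n) => [li|_]; last by exists (X i).
  have [dX nX] := hX i (ltnW li); have [D' HD'] := card_le_succ_shrink wo dX nX.
  by exists D'.
pose X' i := if i < n then D i else X i.
have X'X i : i < n.+1 -> forall u, X' i u -> X i u.
  by move=> _ u; rewrite /X'; case: ltnP => [li|//]; case: (HD i li) => _ DX _ _; apply: DX.
have hX' i : i < n -> downward_closed lt (X' i) /\ ~ card_le_succ i (X' i) K.
  by move=> li; rewrite /X' li; case: (HD i li).
have [[s [col [bs ms]]]|[G Grange Gfib]] :=
    monochromatic_box_step (fun y => IH X' hX' (slice c n y)).
  by exists s, col; split => //; apply: box_in_sub bs.
have iK : inhabited K by case: hK => _ [e _]; exact: inhabits (e 0).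
have LW : card_le_succ n (fun u => exists2 i, i < n & X' i u) K.
  apply: (card_le_succ_segments wo iK) => b [i li]; rewrite /X' li => Db.
  by exists i => //; case: (HD i li) => _ _ _; apply.
have idK : exists f : K -> K, injective_on (fun _ => True) f by exists (fun x => x).
have LB := card_le_succ_setX hK idK
  (card_le_succ_padded_seqs hK (fun _ => u0) n (card_le_succ_padded_seqs hK u0 k LW)).
have LXn := card_le_succ_finite_fibers hK (fun y _ => conj (Grange y) I) Gfib LB.
exfalso; move: LXn; rewrite /X' ltnn; exact: (hX n (ltnSn n)).2.
Qed.

(* The template P is mapped into the box coordinatewise, by sending the j-th value of
   coordinate i among the points of P to the j-th point of the i-th side. *)
Lemma monochromatic_edge (d k : nat) (T K : Type) (P : ('I_d -> T) -> Prop)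
    (c : ('I_d -> R) -> K) (u0 : R) s col :
  0 < k -> template k P -> box_in k d (fun _ _ => True) s ->
  monochromatic_box u0 k (fun p : nat -> R => c (fun i : 'I_d => p i)) d s col ->
  exists2 Q, L_edge k P Q & forall y, Q y -> c y = col.
Proof.
move=> k0 [g [gi gP]] bs ms.
have /choice[idx idxP] : forall i, exists f : T -> 'I_k, forall j, g (f (g j i)) i = g j i.
  move=> i; have [f fP] := choice_default (Ordinal k0) (fun v (j : 'I_k) => g j i = v).
  by exists f => j; apply: fP; exists j.
pose f (x : 'I_d -> T) : 'I_d -> R := fun i => s i (idx i (x i)).
have fg_inj : injective (fun j => f (g j)).
  move=> j1 j2 /= e; apply: gi; apply: funext => i.
  have /= es := congr1 (fun h => h i) e.
  have /val_inj ei := (bs i (ltn_ord i)).2 _ _ (ltn_ord _) (ltn_ord _) es.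
  by rewrite -idxP ei idxP.
exists (fun y => exists2 x, P x & f x = y).
  split.
    exists (fun j => f (g j)); split=> // y.
    split=> [[x /gP [j <-] <-]|[j <-]]; first by exists j.
    by exists (g j) => //; apply/gP; exists j.
  exists f; split=> [x Px|]; first by exists x.
  by split=> [y [x Px <-]|x y _ _ i e]; [exists x|rewrite /f e].
move=> y [x Px <-]; pose j n := if insub n is Some i then val (idx i (x i)) else 0.
have jk n : j n < k by rewrite /j; case: insub => // i; apply: ltn_ord.
rewrite -(ms j jk); congr c; apply: funext => i.
by rewrite /box_point ltn_ord /j valK.
Qed.

(** * Ternary expansions *)

Section CantorReal.
Import Coquelicot.

Definition cantor_real (b : nat -> bool) : R :=
  Series (fun n => if b n then (/ 3) ^ n else 0).

Let third_lt1 : Rabs (/ 3) < 1.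
Proof. rewrite Rabs_pos_eq; lra. Qed.

Let digit_bounds b n : 0 <= (if b n then (/ 3) ^ n else 0) <= (/ 3) ^ n.
Proof. by case: (b n); split; try apply: Rle_refl; apply: pow_le; lra. Qed.

Let ex_digits b : ex_series (fun n => if b n then (/ 3) ^ n else 0).
Proof.
apply: (ex_series_le _ (fun n => (/ 3) ^ n)).
  by move=> n; rewrite /norm /= /abs /= Rabs_pos_eq; case: (digit_bounds b n).
by exists (/ (1 - / 3)); exact: is_series_geom.
Qed.

Let cantor_real_bounds b : 0 <= cantor_real b <= 3 / 2.
Proof.
split.
  have <- : Series (fun _ : nat => 0) = 0.
    by rewrite (Series_ext _ (fun n => 0 * (/ 3) ^ n)) ?Series_scal_l => [|n]; ring.
  apply: Series_le => [n|]; last exact: ex_digits.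
  by split; [apply: Rle_refl|case: (digit_bounds b n)].
apply: (Rle_trans _ (Series (fun n => (/ 3) ^ n))).
  apply: Series_le => [n|]; first exact: digit_bounds.
  by exists (/ (1 - / 3)); exact: is_series_geom.
rewrite Series_geom //; lra.
Qed.

Let cantor_real_shift b :
  cantor_real b = (if b 0%nat then 1 else 0) + / 3 * cantor_real (fun n => b n.+1).
Proof.
rewrite /cantor_real Series_incr_1; last exact: ex_digits.
rewrite -Series_scal_l; congr (_ + _).
by apply: Series_ext => n; case: (b n.+1) => /=; lra.
Qed.

(* Digits in base 3 that are 0 or 1 determine the number: a tail contributes at most
   half of the preceding digit's weight. *)
Lemma cantor_real_inj : injective cantor_real.
Proof.
suff neq (n : nat) : forall b b' : nat -> bool, b n <> b' n ->
    (forall i, ltn i n -> b i = b' i) ->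
    cantor_real b <> cantor_real b'.
  move=> b b' e; apply: funext => n; apply: contrapT => nn.
  have [m /eqP bm mmin] := ex_minnP (ex_intro (fun n => b n != b' n) n (introN eqP nn)).
  apply: (neq m b b' bm _ e) => i li; apply/eqP; apply: contraTT li => hi.
  by rewrite -leqNgt; apply: mmin.
elim: n => [|n IH] b b' hn hlt; rewrite (cantor_real_shift b) (cantor_real_shift b').
  have := cantor_real_bounds (fun n => b n.+1); have := cantor_real_bounds (fun n => b' n.+1).
  by case: (b 0%nat) hn; case: (b' 0%nat) => // _; lra.
rewrite (hlt 0%nat) //.
have := IH (fun i => b i.+1) (fun i => b' i.+1) hn (fun i li => hlt i.+1 li); lra.
Qed.

End CantorReal.

Theorem corollary1p3 (d k : nat) (T : Type) (P : ('I_d -> T) -> Prop)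
  (K : Type) :
  1 <= d -> 2 <= k -> template k P -> is_chromatic_number k P K ->
  card_le_succ (d - 1) (fun _ : nat -> bool => True) K.
Proof.
move=> d1 k2 tP [[c pc] _].
pose c' (p : nat -> R) := c (fun i : 'I_d => p i).
have no_box s col : box_in k d (fun _ _ => True) s -> ~ monochromatic_box 0%R k c' d s col.
  move=> bs ms; have [Q EQ Qcol] := monochromatic_edge (ltnW k2) tP bs ms.
  by have [x [y [Qx [Qy]]]] := pc Q EQ; rewrite (Qcol _ Qx) (Qcol _ Qy).
have [[m LK]|[e ei]] := finite_or_nat_injection (c (fun _ => 0%R)).
  have hX i : i < d -> card_ge_nat (fun _ : R => True) (side_size k m i).
    by move=> _; exists INR; split=> // a b _ _; exact: INR_eq.
  by have [s [col [bs /(no_box _ _ bs)]]] := monochromatic_box_finite 0%R LK hX c'.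
have [[i li Li]|nL] := pselect (exists2 i, i < d & card_le_succ i (fun _ : R => True) K).
  apply: (card_le_succ_inj (f := cantor_real) _ _ (card_le_succ_le _ Li)) => //.
    by move=> x y _ _; apply: cantor_real_inj.
  by rewrite leq_subRL // addnC.
have [lt wo] := strict_wellorder_exists R.
have hX i : i < d ->
    downward_closed lt (fun _ : R => True) /\ ~ card_le_succ i (fun _ : R => True) K.
  by move=> li; split => // Li; apply: nL; exists i.
by have [s [col [bs /(no_box _ _ bs)]]] :=
  monochromatic_box_infinite 0%R k (infinite_absorbing_of_nat ei) wo hX c'.
Qed.
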